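(* Let $E$ be a CM field that is a finite Galois extension of $\mathbb{Q}$ with Galois group $G$, with a fixed embedding $E\hookrightarrow\mathbb{C}$, and let $V$ be a finite-dimensional $E$-vector space. Let $\mathfrak{k}$ be a semisimple $\mathbb{Q}$-Lie subalgebra of $\mathfrak{sl}_E(V)$ and $\mathfrak{k}_\mathbb{C}=\mathfrak{k}\otimes_\mathbb{Q}\mathbb{C}$. Suppose: (I) there exists $\sigma_0\in G$ such that $P_{\sigma_0}(\mathfrak{k}_\mathbb{C})=\mathfrak{sl}_\mathbb{C}(V_{\sigma_0})$; (II) for each pair $(\sigma,\tau)\in G^2$ with $\sigma\neq\tau$ and $\sigma\neq\bar\tau$, there exists $\kappa\in G$ such that, with $\sigma_0=\kappa\sigma$, $\tau_0=\kappa\tau$, one has $P_{\sigma_0,\tau_0}(\mathfrak{k}_\mathbb{C})=\mathfrak{sl}_\mathbb{C}(V_{\sigma_0})\oplus\mathfrak{sl}_\mathbb{C}(V_{\tau_0})$. Then $\dim_\mathbb{Q}\mathfrak{k}\ge \frac12[E:\mathbb{Q}]\big((\dim_E V)^2-1\big)$.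
   Context: $V_\mathbb{C}=V\otimes_\mathbb{Q}\mathbb{C}=\bigoplus_{\sigma\in G}V_\sigma$, where (identifying $\sigma\in G$ with the embedding $E\xrightarrow{\sigma}E\subset\mathbb{C}$) $V_\sigma=\{w\in V_\mathbb{C}:(e\otimes1)w=\sigma(e)w\ \forall e\in E\}$. For a commutative ring $R$ and free $R$-module $N$ of finite rank, $\mathfrak{sl}_R(N)$ is the Lie algebra of trace-zero $R$-endomorphisms. One has $\mathfrak{sl}_E(V)\otimes_\mathbb{Q}\mathbb{C}=\bigoplus_{\sigma\in G}\mathfrak{sl}_\mathbb{C}(V_\sigma)$; $P_\sigma$ denotes the projection onto $\mathfrak{sl}_\mathbb{C}(V_\sigma)$ and, for $\sigma\ne\tau$, $P_{\sigma,\tau}$ the projection onto $\mathfrak{sl}_\mathbb{C}(V_\sigma)\oplus\mathfrak{sl}_\mathbb{C}(V_\tau)$. For $\sigma\in G$, $\bar\sigma$ denotes the composition of $\sigma$ with complex conjugation of $E$. *)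

From HB Require Import structures.
From mathcomp Require Import all_boot all_order all_algebra all_fingroup all_field.
Set Implicit Arguments. Unset Strict Implicit. Unset Printing Implicit Defensive.
Import Order.TTheory GRing.Theory Num.Theory.
Local Open Scope ring_scope.

Definition totally_real (F : fieldType) : Prop :=
  forall phi : {rmorphism F -> algC}, forall x : F, phi x \is Num.real.

Definition totally_imaginary (E : fieldType) : Prop :=
  forall phi : {rmorphism E -> algC}, exists x : E, phi x \isn't Num.real.

Definition CM_field (E : fieldExtType rat) : Prop :=
  totally_imaginary E /\
  exists F : {subfield E}, (\dim_F {:E})%N = 2%N /\ totally_real (subvs_of F).

Section Lie.
Variables (E : fieldType) (n : nat).
Local Notation M := 'M[E]_n.

Definition lie_br (X Y : M) : M := X *m Y - Y *m X.

Definition in_Qspan d (b : 'I_d -> M) (X : M) : Prop :=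
  exists c : 'I_d -> rat, X = \sum_(i < d) (ratr (c i) : E) *: b i.

Definition Q_free d (b : 'I_d -> M) : Prop :=
  forall c : 'I_d -> rat,
    \sum_(i < d) (ratr (c i) : E) *: b i = 0 -> forall i, c i = 0.

Definition Qsubspace (I : M -> Prop) : Prop :=
  [/\ I 0, (forall X Y, I X -> I Y -> I (X + Y))
         & (forall (q : rat) X, I X -> I ((ratr q : E) *: X))].

Definition lie_ideal (k I : M -> Prop) : Prop :=
  [/\ Qsubspace I, (forall X, I X -> k X)
         & (forall X Y, k X -> I Y -> I (lie_br X Y))].

(* derived algebra [I, I] (span of brackets; sums suffice as I is a
   Q-subspace) *)
Definition derived (I : M -> Prop) : M -> Prop :=
  fun X => exists s : seq (M * M),
    (forall p, p \in s -> I p.1 /\ I p.2) /\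
    X = \sum_(p <- s) lie_br p.1 p.2.

Definition lie_solvable (I : M -> Prop) : Prop :=
  exists m : nat, forall X, iter m derived I X -> X = 0.

Definition lie_semisimple (k : M -> Prop) : Prop :=
  forall I, lie_ideal k I -> lie_solvable I -> forall X, I X -> X = 0.

End Lie.

(* For an embedding phi : E -> C, the component of X \in sl_E(E^n) in
   sl_C(V_phi) (with the basis of V_phi induced by the standard basis of E^n)
   is the matrix map_mx phi X. *)

(* P_phi(k_C) = sl_C(V_phi), where k has Q-basis b *)
Definition proj1_full (E : fieldType) (n d : nat) (b : 'I_d -> 'M[E]_n)
    (phi : E -> algC) : Prop :=
  forall Y : 'M[algC]_n,
    \tr Y = 0 <-> exists c : 'I_d -> algC,
                    Y = \sum_(i < d) c i *: map_mx phi (b i).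

(* P_{phi,psi}(k_C) = sl_C(V_phi) (+) sl_C(V_psi) *)
Definition proj2_full (E : fieldType) (n d : nat) (b : 'I_d -> 'M[E]_n)
    (phi psi : E -> algC) : Prop :=
  forall Y1 Y2 : 'M[algC]_n,
    (\tr Y1 = 0 /\ \tr Y2 = 0) <->
    exists c : 'I_d -> algC,
      Y1 = \sum_(i < d) c i *: map_mx phi (b i) /\
      Y2 = \sum_(i < d) c i *: map_mx psi (b i).

(* Choose one embedding from each pair {sigma, conj o sigma}: this leaves a set S of
   at least [E:Q]/2 elements of G, no two of them complex conjugate. Twisting by
   Galois automorphisms and descending from C to E, (I) and (II) say that the
   E-span K of the tuples (sigma(b_i))_{sigma in S} projects onto sl_n(E) in every
   coordinate and onto sl_n(E) + sl_n(E) in every pair of coordinates. As K is closed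
   under the componentwise bracket and sl_n is perfect, K contains every tuple of
   traceless matrices, hence d >= dim_E K >= |S| (n^2 - 1). *)

From HB Require Import structures.
From mathcomp Require Import all_boot all_order all_algebra all_fingroup all_field.
From mathcomp Require Import boolp.
Import GRing.Theory Num.Theory.
Local Open Scope ring_scope.

Set Implicit Arguments. Unset Strict Implicit. Unset Printing Implicit Defensive.

Section LieBracket.
Variables (E : fieldType) (n : nat).
Implicit Types (X Y : 'M[E]_n).

Lemma lie_brZl a X Y : lie_br (a *: X) Y = a *: lie_br X Y.
Proof. by rewrite /lie_br -scalemxAl -scalemxAr scalerBr. Qed.

Lemma lie_br0l Y : lie_br 0 Y = 0.
Proof. by rewrite /lie_br mulmx0 mul0mx subrr. Qed.

Lemma lie_br0r X : lie_br X 0 = 0.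
Proof. by rewrite /lie_br mulmx0 mul0mx subrr. Qed.

Lemma lie_br_sumZl (I : finType) (c : I -> E) (F : I -> 'M[E]_n) Y :
  lie_br (\sum_i c i *: F i) Y = \sum_i c i *: lie_br (F i) Y.
Proof.
rewrite /lie_br mulmx_suml mulmx_sumr -sumrB.
by apply: eq_bigr => i _; rewrite -scalemxAl -scalemxAr scalerBr.
Qed.

Lemma lie_br_sumZr (I : finType) (c : I -> E) X (F : I -> 'M[E]_n) :
  lie_br X (\sum_i c i *: F i) = \sum_i c i *: lie_br X (F i).
Proof.
rewrite /lie_br mulmx_suml mulmx_sumr -sumrB.
by apply: eq_bigr => i _; rewrite -scalemxAl -scalemxAr scalerBr.
Qed.

Lemma map_mx_lie_br (L : fieldType) (f : {rmorphism E -> L}) X Y :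
  map_mx f (lie_br X Y) = lie_br (map_mx f X) (map_mx f Y).
Proof. by rewrite /lie_br map_mxB !map_mxM. Qed.

Lemma mxtrace_delta (i j : 'I_n) : \tr (delta_mx i j : 'M[E]_n) = (i == j)%:R.
Proof.
rewrite /mxtrace (bigD1 i) //= mxE eqxx /= big1 ?addr0 // => k /negPf nki.
by rewrite mxE nki.
Qed.

Local Notation traceless := (fun X : 'M[E]_n => \tr X = 0).

Lemma derived0 (I : 'M[E]_n -> Prop) : derived I 0.
Proof. by exists [::]; rewrite big_nil. Qed.

Lemma derivedD (I : 'M[E]_n -> Prop) X Y :
  derived I X -> derived I Y -> derived I (X + Y).
Proof.
move=> [s [Is ->]] [t [It ->]]; exists (s ++ t); rewrite big_cat; split=> //.
by move=> p; rewrite mem_cat => /orP[/Is | /It].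
Qed.

Lemma derived_traceless_scale a X : derived traceless X -> derived traceless (a *: X).
Proof.
move=> [s [Is ->]]; exists [seq (a *: p.1, p.2) | p <- s]; split.
  by move=> _ /mapP[p /Is[tr1 tr2] ->]; rewrite /= mxtraceZ tr1 mulr0.
by rewrite big_map scaler_sumr; apply: eq_bigr => p _; rewrite lie_brZl.
Qed.

Hypothesis two_neq0 : 2%:R != 0 :> E.

(* [E_ij = [E_ij / 2, E_jj - E_ii]] and [E_ii - E_jj = [E_ij, E_ji]] for [i != j]. *)
Lemma sl_perfect X : \tr X = 0 -> derived traceless X.
Proof.
move=> trX; have [n0 | n_gt0] := posnP n.
  suff -> : X = 0 by apply: derived0.
  by apply/matrixP => i; have := ltn_ord i; rewrite {2}n0.
pose i0 : 'I_n := Ordinal n_gt0.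
have off_diag (i j : 'I_n) : i != j -> derived traceless (delta_mx i j).
  move=> nij; exists [:: (2%:R^-1 *: delta_mx i j, delta_mx j j - delta_mx i i)].
  split=> [p | ].
    by rewrite inE => /eqP -> /=; rewrite mxtraceZ raddfB /= !mxtrace_delta
      (negPf nij) !eqxx mulr0 subrr.
  rewrite big_seq1 /= lie_brZl /lie_br mulmxBr mulmxBl !mul_delta_mx.
  rewrite !mul_delta_mx_0 1?eq_sym // subr0 sub0r opprK -mulr2n -scaler_nat.
  by rewrite scalerA mulVf // scale1r.
have diag (i : 'I_n) : derived traceless (delta_mx i i - delta_mx i0 i0).
  have [-> | ni] := eqVneq i i0; first by rewrite subrr; apply: derived0.
  exists [:: (delta_mx i i0, delta_mx i0 i)]; split; last first.
    by rewrite big_seq1 /= /lie_br !mul_delta_mx.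
  move=> p; rewrite inE => /eqP -> /=.
  by rewrite !mxtrace_delta (negPf ni) eq_sym (negPf ni).
have -> : X = \sum_i \sum_j (if i == j then X i i *: (delta_mx i i - delta_mx i0 i0)
                                 else X i j *: delta_mx i j) + \tr X *: delta_mx i0 i0.
  rewrite [LHS]matrix_sum_delta /mxtrace scaler_suml -big_split /=.
  apply: eq_bigr => i _; rewrite (bigD1 i) //= [in RHS](bigD1 i) //= eqxx.
  rewrite scalerBr addrAC subrK; congr (_ + _).
  by apply: eq_bigr => j nj; rewrite eq_sym (negPf nj).
rewrite trX scale0r addr0.
elim/big_ind: _ => [|Y Z|i _]; [exact: derived0 | exact: derivedD |].
elim/big_ind: _ => [|Y Z|j _]; [exact: derived0 | exact: derivedD |].
case: eqP => [_ | /eqP nij]; apply: derived_traceless_scale.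
  exact: diag.
exact: off_diag.
Qed.

End LieBracket.

Section TracelessTuples.
Variables (E : fieldType) (I : finType) (n : nat).
Local Notation V := {ffun I -> 'M[E]_n}.

Definition lie_br_ffun (g h : V) : V := [ffun a => lie_br (g a) (h a)].

Lemma lie_br_ffun_sumZl (J : finType) (c : J -> E) (F : J -> V) h :
  lie_br_ffun (\sum_j c j *: F j) h = \sum_j c j *: lie_br_ffun (F j) h.
Proof.
apply/ffunP => a; rewrite ffunE !sum_ffunE.
under eq_bigr do rewrite ffunE.
by rewrite lie_br_sumZl; apply: eq_bigr => j _; rewrite !ffunE.
Qed.

Lemma lie_br_ffun_sumZr (J : finType) (c : J -> E) g (F : J -> V) :
  lie_br_ffun g (\sum_j c j *: F j) = \sum_j c j *: lie_br_ffun g (F j).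
Proof.
apply/ffunP => a; rewrite ffunE !sum_ffunE.
under eq_bigr do rewrite ffunE.
by rewrite lie_br_sumZr; apply: eq_bigr => j _; rewrite !ffunE.
Qed.

Variable K : {vspace V}.
Hypothesis two_neq0 : 2%:R != 0 :> E.
Hypothesis lie_br_ffun_closed :
  forall g h, g \in K -> h \in K -> lie_br_ffun g h \in K.
Hypothesis proj_full : forall a X, \tr X = 0 -> exists2 g, g \in K & g a = X.
Hypothesis proj2_full_vanishing : forall a t, a != t -> forall X, \tr X = 0 ->
  exists2 g, g \in K & g a = X /\ g t = 0.

(* Induction on [s]: writing [X] as a sum of brackets [[Y, Z]], the bracket of a
   lift of [Y] vanishing on [s] with a lift of [Z] vanishing at [t] lifts [[Y, Z]]
   and vanishes on [t :: s]. *)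
Lemma lift_vanishing_on (a : I) (s : seq I) X : a \notin s -> \tr X = 0 ->
  exists2 g, g \in K & g a = X /\ {in s, forall t, g t = 0}.
Proof.
elim: s X => [|t s IHs] X; first by move=> _ /(proj_full a) [g Kg ga]; exists g.
rewrite inE negb_or => /andP[a_neq_t a_notin_s] /(sl_perfect two_neq0) [ps [tr_ps ->]].
rewrite big_seq; elim/big_ind: _ => [| Y Z [g Kg [ga gs]] [h Kh [ha hs]] | p p_in].
- by exists 0; rewrite ?mem0v // ffunE; split=> // ? _; rewrite ffunE.
- exists (g + h); first exact: memvD.
  by rewrite ffunE ga ha; split=> // u us; rewrite ffunE gs ?hs ?addr0.
have [trY trZ] := tr_ps p p_in.
have [g Kg [ga gs]] := IHs _ a_notin_s trY.
have [h Kh [ha ht]] := proj2_full_vanishing a_neq_t trZ.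
exists (lie_br_ffun g h); first exact: lie_br_ffun_closed.
rewrite ffunE ga ha; split=> // u; rewrite inE ffunE => /predU1P[-> | us].
  by rewrite ht lie_br0r.
by rewrite gs // lie_br0l.
Qed.

Lemma traceless_ffun_in (g : V) : (forall a, \tr (g a) = 0) -> g \in K.
Proof.
move=> trg.
have lift a : exists2 h : V,
    h \in K & h a = g a /\ {in [seq t <- enum I | t != a], forall t, h t = 0}.
  by apply: lift_vanishing_on; rewrite ?mem_filter ?eqxx.
have [h Kh hg] := fin_all_exists2 lift.
have -> : g = \sum_a h a.
  apply/ffunP => t; rewrite sum_ffunE (bigD1 t) //= big1 ?addr0; first by case: (hg t).
  by move=> a nat; case: (hg a) => _ -> //; rewrite mem_filter eq_sym nat mem_enum.
by apply: memv_suml => a _; apply: Kh.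
Qed.

End TracelessTuples.

Section TraceTuple.
Variables (E : fieldType) (I : finType) (n : nat).

Definition mxtrace_ffun (g : {ffun I -> 'M[E]_n}) : {ffun I -> E^o} :=
  [ffun a => \tr (g a)].

Fact mxtrace_ffun_is_linear : linear mxtrace_ffun.
Proof. by move=> c g h; apply/ffunP => a; rewrite !ffunE raddfD /= mxtraceZ. Qed.

HB.instance Definition _ := GRing.isLinear.Build E {ffun I -> 'M[E]_n} {ffun I -> E^o}
  _ mxtrace_ffun mxtrace_ffun_is_linear.

Lemma dim_traceless_ffun : (0 < n)%N ->
  \dim (lker (linfun mxtrace_ffun)) = (#|I| * (n ^ 2 - 1))%N.
Proof.
move=> n_gt0; pose i0 : 'I_n := Ordinal n_gt0.
have := limg_ker_dim (linfun mxtrace_ffun) fullv; rewrite capfv.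
have -> : (linfun mxtrace_ffun @: fullv)%VS = fullv.
  apply/eqP; rewrite eqEsubv subvf /=; apply/subvP => r _.
  have -> : r = linfun mxtrace_ffun [ffun a => r a *: delta_mx i0 i0].
    by apply/ffunP => a; rewrite lfunE !ffunE mxtraceZ mxtrace_delta eqxx mulr1.
  exact/memv_img/memvf.
have dim_ffun (vT : vectType E) : dim {ffun I -> vT} = (#|I| * dim vT)%N by [].
rewrite !dimvf !dim_ffun dim_matrix [dim E^o]/= muln1 mulnBr muln1 => <-.
by rewrite addnK.
Qed.
End TraceTuple.

Lemma memv_span_familyP (K : fieldType) (vT : vectType K) d (w : 'I_d -> vT) v :
  reflect (exists c : 'I_d -> K, v = \sum_i c i *: w i)
          (v \in <<[tuple w i | i < d]>>%VS).
Proof.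
apply: (iffP idP) => [/coord_span -> | [c ->]].
  exists (coord [tuple w i | i < d] ^~ v).
  by apply: eq_bigr => i _; rewrite -tnth_nth tnth_mktuple.
by apply: memv_suml => i _; apply/memvZ/memv_span; rewrite -[w i](tnth_mktuple w) mem_tnth.
Qed.

Section EmbeddedSpan.
Variables (E : fieldType) (n d : nat) (b : 'I_d -> 'M[E]_n).

Definition image_spans_sl (phi : E -> E) : Prop :=
  forall X : 'M[E]_n, \tr X = 0 ->
    exists c : 'I_d -> E, X = \sum_i c i *: map_mx phi (b i).

Definition images_span_sl2 (phi psi : E -> E) : Prop :=
  forall X Y : 'M[E]_n, \tr X = 0 -> \tr Y = 0 ->
    exists c : 'I_d -> E, X = \sum_i c i *: map_mx phi (b i) /\
                          Y = \sum_i c i *: map_mx psi (b i).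

Variables (I : finType) (f : I -> {rmorphism E -> E}).

Definition embedded_family i : {ffun I -> 'M[E]_n} := [ffun a => map_mx (f a) (b i)].
Local Notation W := embedded_family.
Local Notation K := <<[tuple W i | i < d]>>%VS.

Lemma embedded_family_sumE (c : 'I_d -> E) a :
  (\sum_i c i *: W i) a = \sum_i c i *: map_mx (f a) (b i).
Proof. by rewrite sum_ffunE; apply: eq_bigr => i _; rewrite !ffunE. Qed.

Hypothesis lie_br_in_Qspan : forall i j, in_Qspan b (lie_br (b i) (b j)).

Lemma embedded_span_lie_closed g h : g \in K -> h \in K -> lie_br_ffun g h \in K.
Proof.
move=> /memv_span_familyP[c ->] /memv_span_familyP[c' ->].
rewrite lie_br_ffun_sumZl; apply: memv_suml => i _; apply: memvZ.
rewrite lie_br_ffun_sumZr; apply: memv_suml => j _; apply: memvZ.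
have [q bij] := lie_br_in_Qspan i j.
apply/memv_span_familyP; exists (fun l => ratr (q l)); apply/ffunP => a.
rewrite embedded_family_sumE !ffunE -map_mx_lie_br bij raddf_sum.
by apply: eq_bigr => l _; rewrite /= map_mxZ fmorph_rat.
Qed.

Hypotheses (two_neq0 : 2%:R != 0 :> E) (n_gt0 : (0 < n)%N).
Hypothesis image_spans : forall a, image_spans_sl (f a).
Hypothesis images_span2 : forall a t, a != t -> images_span_sl2 (f a) (f t).

Lemma dim_embedded_span_ge : (#|I| * (n ^ 2 - 1) <= d)%N.
Proof.
rewrite -(dim_traceless_ffun E I n_gt0).
apply: (@leq_trans (\dim K)); last first.
  by rewrite -[X in (_ <= X)%N](size_tuple [tuple W i | i < d]) dim_span.
apply/dimvS/subvP => g; rewrite memv_ker => /eqP/ffunP trg0.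
apply: (traceless_ffun_in two_neq0 embedded_span_lie_closed)
  => [a X | a t neq_at X trX | a].
- move=> /(image_spans a)[c ->]; exists (\sum_i c i *: W i).
    by apply/memv_span_familyP; exists c.
  exact: embedded_family_sumE.
- have [c [-> c_t]] := images_span2 neq_at trX (mxtrace0 _ _).
  exists (\sum_i c i *: W i); first by apply/memv_span_familyP; exists c.
  by rewrite !embedded_family_sumE -c_t.
by have := trg0 a; rewrite lfunE !ffunE.
Qed.

End EmbeddedSpan.

Lemma sum_row_mx (R : nmodType) (J : Type) (r : seq J) (P : pred J) m n1 n2
    (F : J -> 'M[R]_(m, n1)) (G : J -> 'M[R]_(m, n2)) :
  \sum_(j <- r | P j) row_mx (F j) (G j) =
  row_mx (\sum_(j <- r | P j) F j) (\sum_(j <- r | P j) G j).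
Proof. by elim/big_rec3: _ => [|j ? ? ? _ ->]; rewrite ?row_mx0 ?add_row_mx. Qed.

(* Linear dependence is detected by ranks, which are invariant under field
   extension ([map_submx]). *)
Lemma map_mx_combination_descent (F L : fieldType) (j : {rmorphism F -> L})
    p q d (A : 'I_d -> 'M[F]_(p, q)) (X : 'M[F]_(p, q)) :
  (exists c : 'I_d -> L, map_mx j X = \sum_i c i *: map_mx j (A i)) ->
  exists c : 'I_d -> F, X = \sum_i c i *: A i.
Proof.
move=> [c jXc]; pose B := \matrix_i mxvec (A i).
have : (mxvec X <= B)%MS.
  rewrite -(map_submx j); apply/submxP; exists (\row_i c i).
  rewrite map_mxvec jXc mulmx_sum_row linear_sum; apply: eq_bigr => i _.
  by rewrite linearZ mxE -map_row rowK map_mxvec.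
case/submxP => D XD; exists (fun i => D 0 i); apply: (can_inj mxvecK).
by rewrite XD mulmx_sum_row linear_sum; apply: eq_bigr => i _; rewrite linearZ rowK.
Qed.

Section Descent.
Variables (E : fieldType) (n d : nat) (b : 'I_d -> 'M[E]_n) (j : {rmorphism E -> algC}).

Lemma proj1_full_descent (phi : {rmorphism E -> E}) (psi : E -> algC) :
  psi =1 j \o phi -> proj1_full b psi -> image_spans_sl b phi.
Proof.
move=> psiE full X trX.
apply: (map_mx_combination_descent (j := j) (A := fun i => map_mx phi (b i))).
have [|c ->] := (full (map_mx j X)).1; first by rewrite trace_map_mx trX rmorph0.
by exists c; apply: eq_bigr => i _; rewrite -map_mx_comp (eq_map_mx _ psiE).
Qed.

Lemma proj2_full_descent (phi phi' : {rmorphism E -> E}) (psi psi' : E -> algC) :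
  psi =1 j \o phi -> psi' =1 j \o phi' -> proj2_full b psi psi' ->
  images_span_sl2 b phi phi'.
Proof.
move=> psiE psi'E full X Y trX trY.
have [|c [jXc jYc]] := (full (map_mx j X) (map_mx j Y)).1.
  by rewrite !trace_map_mx trX trY rmorph0.
pose A i := row_mx (map_mx phi (b i)) (map_mx phi' (b i)).
have [|e XYe] := map_mx_combination_descent (j := j) (A := A) (X := row_mx X Y) _.
  exists c; under eq_bigr do rewrite map_row_mx scale_row_mx.
  rewrite map_row_mx jXc jYc sum_row_mx; congr row_mx; apply: eq_bigr => i _;
    by rewrite -map_mx_comp ?(eq_map_mx _ psiE) ?(eq_map_mx _ psi'E).
move: XYe; under eq_bigr do rewrite scale_row_mx.
by rewrite sum_row_mx => /eq_row_mx; exists e.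
Qed.

End Descent.

(* Keep, in each pair of related points, the one of smaller rank; the other one
   is mapped injectively to its partner. *)
Lemma matching_independent_half (T : finType) (r : T -> T -> Prop) :
  (forall s t, r s t -> r t s) -> (forall s t t', r s t -> r s t' -> t = t') ->
  exists S : {set T}, (#|T| <= 2 * #|S|)%N /\ {in S &, forall s t, s != t -> ~ r s t}.
Proof.
move=> r_sym r_fun.
pose S := [set s | [forall t, `[< r s t >] ==> (enum_rank s <= enum_rank t)%N]].
have inS s t : s \in S -> r s t -> (enum_rank s <= enum_rank t)%N.
  by rewrite inE => /forallP/(_ t)/implyP Ss /asboolP/Ss.
exists S; split; last first.
  move=> s t Ss St neq_st rst; case/eqP: neq_st; apply/enum_rank_inj/val_inj/eqP.
  by rewrite eqn_leq (inS s t) ?(inS t s) //; apply: r_sym.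
pose p s := odflt s [pick t | `[< r s t >]].
have p_notin s : s \in ~: S -> r s (p s) /\ p s \in S.
  rewrite !inE negb_forall => /existsP[t]; rewrite negb_imply -ltnNge.
  case/andP=> /asboolP rst lt_ts; rewrite /p.
  case: pickP => [u /asboolP rsu | /(_ t)/asboolP//].
  rewrite -(r_fun _ _ _ rst rsu); split=> //; apply/forallP => v; apply/implyP.
  by move=> /asboolP rtv; rewrite -(r_fun _ _ _ (r_sym _ _ rst) rtv) ltnW.
have p_inj : {in ~: S &, injective p}.
  move=> s s' /p_notin[rs _] /p_notin[rs' _] ps_eq.
  by apply: (r_fun (p s)); [apply: r_sym | rewrite ps_eq; apply: r_sym].
have : (#|~: S| <= #|S|)%N.
  rewrite -(card_in_imset p_inj); apply/subset_leq_card/subsetP => _ /imsetP[s sS ->].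
  by case: (p_notin s sS).
by rewrite -(cardsC S) mul2n -addnn leq_add2l.
Qed.

Section ConjugateEmbeddings.
Variables (E : splittingFieldType rat) (iota : {rmorphism E -> algC}).

Definition conjugate_embeddings (s t : gal_of {:E}) : Prop :=
  forall x, iota (s x) = (iota (t x))^*.

Lemma conjugate_embeddings_sym s t :
  conjugate_embeddings s t -> conjugate_embeddings t s.
Proof. by move=> st x; rewrite st conjCK. Qed.

Lemma conjugate_embeddings_uniq s t t' :
  conjugate_embeddings s t -> conjugate_embeddings s t' -> t = t'.
Proof.
move=> st st'; apply/eqP/gal_eqP => x _; apply: (fmorph_inj iota).
by rewrite -[LHS]conjCK -st st' conjCK.
Qed.

End ConjugateEmbeddings.

Lemma mem_Gal_full (E : splittingFieldType rat) (s : gal_of {:E}) :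
  s \in 'Gal({:E} / 1%VS)%g.
Proof. by rewrite gal_kHom ?sub1v // k1HomE; apply: ahomWin. Qed.

Theorem lemma2p2 (E : splittingFieldType rat)
    (iota : {rmorphism E -> algC})
    (n d : nat) (b : 'I_d -> 'M[E]_n) :
  galois 1%VS {:E} ->
  CM_field E ->
  (* k := Q-span of b, a Q-basis *)
  Q_free b ->
  (forall i, \tr (b i) = 0) ->
  (forall i j, in_Qspan b (lie_br (b i) (b j))) ->
  lie_semisimple (in_Qspan b) ->
  (* (I) *)
  (exists2 s0, s0 \in 'Gal({:E} / 1%VS)%g & proj1_full b (fun x => iota (s0 x))) ->
  (* (II) *)
  (forall s t, s \in 'Gal({:E} / 1%VS)%g -> t \in 'Gal({:E} / 1%VS)%g ->
     s != t ->
     (exists x : E, iota (s x) != (iota (t x))^*) ->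
     exists2 kap, kap \in 'Gal({:E} / 1%VS)%g &
       proj2_full b (fun x => iota ((s * kap)%g x))
                    (fun x => iota ((t * kap)%g x))) ->
  (2 * d >= \dim {:E} * (n ^ 2 - 1))%N.
Proof.
move=> galE _ _ _ b_lie _ [s0 _ full1] full2.
have [-> | n_gt0] := posnP n; first by rewrite exp0n // sub0n muln0.
have [S [card_S indep_S]] := matching_independent_half
  (@conjugate_embeddings_sym E iota) (@conjugate_embeddings_uniq E iota).
have two_neq0 : 2%:R != 0 :> E.
  by rewrite -(rmorph_nat (in_alg E)) fmorph_eq0 pnatr_eq0.
have spans1 (s : {s | s \in S}) : image_spans_sl b (val s).
  apply: (proj1_full_descent (j := iota \o ((val s)^-1 * s0)%g) _ full1) => x /=.
  by rewrite -galM ?memvf // mulKVg.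
have spans2 (s t : {s | s \in S}) : s != t -> images_span_sl2 b (val s) (val t).
  move=> neq_st; have neq_vst : val s != val t by [].
  have [|kap _ full] := full2 _ _ (mem_Gal_full _) (mem_Gal_full _) neq_vst.
    by case/existsNP: (indep_S _ _ (valP s) (valP t) neq_vst) => x /eqP; exists x.
  by apply: (proj2_full_descent (j := iota \o kap) _ _ full) => x /=; rewrite galM ?memvf.
have := dim_embedded_span_ge b_lie two_neq0 n_gt0 spans1 spans2.
have dimE : (\dim {:E} <= 2 * #|{: {s | s \in S}}|)%N.
  have := galois_dim galE; rewrite dimv1 divn1 card_sig => ->.
  exact: leq_trans (max_card _) card_S.
by move/(leq_mul (leqnn 2)); apply: leq_trans; rewrite mulnA leq_mul2r dimE orbT.
Qed.
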